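(* Let $\Gamma$ be a hyper-assertion, $\mathbf t$ a hyper-term, $Q$ a post hyper-assertion, and $i,j\in\mathrm{Idx}$ with $j\notin\mathrm{supp}(\mathbf t)\cup\mathrm{idx}(\Gamma)$. If $\Gamma\vdash\mathrm{wp}\,\mathbf t\,\{Q\}$, then $\Gamma\vdash\mathrm{wp}\,\mathbf t\,\{Q[j\mapsto i]\}$.
   Context: Setting. $\mathrm{Val}=\mathbb{Z}$; $\mathrm{PVar}$ is a countably infinite set of program variables; a store is a function $s:\mathrm{PVar}\to\mathrm{Val}$; indices are $\mathrm{Idx}=\mathbb{N}$. Terms of a first-order imperative language are generated by $t ::= v \mid x \mid * \mid t\oplus t \mid \mathtt{skip}\mid x:=t \mid t;t \mid \mathtt{if}\ t\ \mathtt{then}\ t\ \mathtt{else}\ t \mid \mathtt{while}\ t\ \mathtt{do}\ t$, with a nondeterministic big-step semantics $t,s\Downarrow v,s'$. A hyper-term $\mathbf t$ is a finitely supported partial function from $\mathrm{Idx}$ to terms; a hyper-store is a total function $\mathbf s:\mathrm{Idx}\to\mathrm{Store}$; a hyper-return-value is a finitely supported partial function $\mathbf v:\mathrm{Idx}\rightharpoonup\mathrm{Val}$. $\mathbf t,\mathbf s\Downarrow\mathbf v,\mathbf s'$ holds iff for every $i\in\mathrm{supp}(\mathbf t)$, $\mathbf t(i),\mathbf s(i)\Downarrow\mathbf v(i),\mathbf s'(i)$, and for every $i\notin\mathrm{supp}(\mathbf t)$, $\mathbf s'(i)=\mathbf s(i)$ and $\mathbf v(i)$ is undefined. A hyper-assertion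 is a predicate on hyper-stores; a post hyper-assertion is an upward-closed map $Q$ from hyper-return-values to hyper-assertions (if $Q(\mathbf v)(\mathbf s)$ and $\mathbf v'$ agrees with $\mathbf v$ on $\mathrm{supp}(\mathbf v)$ then $Q(\mathbf v')(\mathbf s)$). Entailment $P\vdash R$ means $\forall\mathbf s.\ P(\mathbf s)\Rightarrow R(\mathbf s)$. $\mathrm{wp}\,\mathbf t\,\{Q\}(\mathbf s):\iff\forall\mathbf v,\mathbf s'.\ (\mathbf t,\mathbf s\Downarrow\mathbf v,\mathbf s')\Rightarrow Q(\mathbf v)(\mathbf s')$. Indices of a hyper-assertion: $\mathrm{idx}(P)=\mathrm{Idx}\setminus\{i\mid\forall\mathbf s,s'.\ P(\mathbf s)\Leftrightarrow P(\mathbf s[i:s'])\}$. Reindexing. For $\pi:\mathrm{Idx}\to\mathrm{Idx}$ and a (possibly partial) function $\mathbf a$ on indices, $\mathbf a[\pi]:=\lambda i.\ \mathbf a(\pi(i))$ (undefined where $\mathbf a(\pi(i))$ is). For a hyper-assertion $P$, $P[\pi](\mathbf s):=P(\mathbf s[\pi])$; for a post hyper-assertion $Q$, $Q[\pi]:=\lambda\mathbf v.\ Q(\mathbf v[\pi])[\pi]$. $[j\mapsto i]$ denotes the reindexing $\pi$ with $\pi(j)=i$ and $\pi(k)=k$ for $k\neq j$. *)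

From Stdlib Require Import ZArith.

Definition Val := Z.
Definition PVar := nat.
Definition Idx := nat.
Definition Store := PVar -> Val.

Inductive term : Type :=
| tval : Val -> term
| tvar : PVar -> term
| tstar : term
| tbin : (Val -> Val -> Val) -> term -> term -> term
| tskip : term
| tassign : PVar -> term -> term
| tseq : term -> term -> term
| tif : term -> term -> term -> term
| twhile : term -> term -> term.

Definition upd_store (s : Store) (x : PVar) (v : Val) : Store :=
  fun y => if Nat.eqb y x then v else s y.

(* Nondeterministic big-step semantics  t, s ⇓ v, s'.
   Conventions: a nonzero value is "true"; skip and a terminated loop
   return 0; an assignment returns the assigned value. *)
Inductive bigstep : term -> Store -> Val -> Store -> Prop :=
| bs_val : forall v s, bigstep (tval v) s v s
| bs_var : forall x s, bigstep (tvar x) s (s x) s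
| bs_star : forall v s, bigstep tstar s v s
| bs_bin : forall op t1 t2 s s1 s2 v1 v2,
    bigstep t1 s v1 s1 -> bigstep t2 s1 v2 s2 ->
    bigstep (tbin op t1 t2) s (op v1 v2) s2
| bs_skip : forall s, bigstep tskip s 0%Z s
| bs_assign : forall x t s s1 v,
    bigstep t s v s1 -> bigstep (tassign x t) s v (upd_store s1 x v)
| bs_seq : forall t1 t2 s s1 s2 v1 v2,
    bigstep t1 s v1 s1 -> bigstep t2 s1 v2 s2 -> bigstep (tseq t1 t2) s v2 s2
| bs_if_true : forall c t1 t2 s s1 s2 vc v,
    bigstep c s vc s1 -> vc <> 0%Z -> bigstep t1 s1 v s2 ->
    bigstep (tif c t1 t2) s v s2
| bs_if_false : forall c t1 t2 s s1 s2 v,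
    bigstep c s 0%Z s1 -> bigstep t2 s1 v s2 ->
    bigstep (tif c t1 t2) s v s2
| bs_while_false : forall c b s s1,
    bigstep c s 0%Z s1 -> bigstep (twhile c b) s 0%Z s1
| bs_while_true : forall c b s s1 s2 s3 vc vb v,
    bigstep c s vc s1 -> vc <> 0%Z -> bigstep b s1 vb s2 ->
    bigstep (twhile c b) s2 v s3 -> bigstep (twhile c b) s v s3.

Definition hterm := Idx -> option term.
Definition hstore := Idx -> Store.
Definition hval := Idx -> option Val.

Definition fin_supp {A} (f : Idx -> option A) : Prop :=
  exists n : nat, forall i : nat, (n <= i)%nat -> f i = None.

Definition hbigstep (t : hterm) (s : hstore) (v : hval) (s' : hstore) : Prop :=
  forall i : Idx,
    match t i with
    | Some ti => exists vi, v i = Some vi /\ bigstep ti (s i) vi (s' i)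
    | None => s' i = s i /\ v i = None
    end.

Definition hassert := hstore -> Prop.
Definition hpost := hval -> hassert.

Definition upward_closed (Q : hpost) : Prop :=
  forall (v v' : hval) (s : hstore),
    Q v s ->
    (forall i x, v i = Some x -> v' i = Some x) ->
    Q v' s.

Definition entails (P R : hassert) : Prop := forall s, P s -> R s.

Definition wp (t : hterm) (Q : hpost) : hassert :=
  fun s => forall v s', hbigstep t s v s' -> Q v s'.

Definition hupd (s : hstore) (i : Idx) (si : Store) : hstore :=
  fun k => if Nat.eqb k i then si else s k.

Definition in_idx (P : hassert) (i : Idx) : Prop :=
  ~ (forall (s : hstore) (si : Store), P s <-> P (hupd s i si)).

Definition reidx {A} (a : Idx -> A) (pi : Idx -> Idx) : Idx -> A :=
  fun k => a (pi k).

Definition reidx_assert (P : hassert) (pi : Idx -> Idx) : hassert :=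
  fun s => P (reidx s pi).

Definition reidx_post (Q : hpost) (pi : Idx -> Idx) : hpost :=
  fun v => reidx_assert (Q (reidx v pi)) pi.

Definition map_to (j i : Idx) : Idx -> Idx :=
  fun k => if Nat.eqb k j then i else k.

From Stdlib Require Import Classical Arith.

(* Given a run of t from s ending in s', the index j is idle in t, so
   restarting from s with component j overwritten by s' i is again a run
   of t; it ends in s' reindexed by [j ↦ i] and returns the old values with
   component j dropped. Gamma does not see component j, so it still holds
   at the new start, and upward closure of Q lifts the dropped return value
   back to the reindexed one. *)

Definition hval_drop (v : hval) (j : Idx) : hval :=
  fun k => if Nat.eqb k j then None else v k.

Lemma not_in_idx_hupd (P : hassert) (j : Idx) (s : hstore) (sj : Store) :
  ~ in_idx P j -> P s -> P (hupd s j sj).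
Proof.
  intros Hj Hs; apply NNPP in Hj.
  exact (proj1 (Hj s sj) Hs).
Qed.

Lemma hbigstep_hupd_idle (t : hterm) (s s' : hstore) (v : hval) (i j : Idx) :
  t j = None -> hbigstep t s v s' ->
  hbigstep t (hupd s j (s' i)) (hval_drop v j) (reidx s' (map_to j i)).
Proof.
  intros Hj Hrun k; unfold hupd, hval_drop, reidx, map_to.
  destruct (Nat.eqb k j) eqn:Ek.
  - apply Nat.eqb_eq in Ek; subst k; rewrite Hj; auto.
  - apply Hrun.
Qed.

Lemma hval_drop_le_reidx (v : hval) (i j : Idx) (k : Idx) (x : Val) :
  hval_drop v j k = Some x -> reidx v (map_to j i) k = Some x.
Proof.
  unfold hval_drop, reidx, map_to.
  destruct (Nat.eqb k j); [discriminate | trivial].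
Qed.

Theorem mainTheorem11 (Gamma : hassert) (t : hterm) (Q : hpost) (i j : Idx)
  (Hfin : fin_supp t) (HQ : upward_closed Q)
  (Hj_t : t j = None) (Hj_G : ~ in_idx Gamma j) :
  entails Gamma (wp t Q) ->
  entails Gamma (wp t (reidx_post Q (map_to j i))).
Proof.
  intros Hwp s Hs v s' Hrun.
  pose proof (hbigstep_hupd_idle t s s' v i j Hj_t Hrun) as Hrun'.
  pose proof (Hwp _ (not_in_idx_hupd Gamma j s (s' i) Hj_G Hs) _ _ Hrun') as HQ'.
  exact (HQ _ _ _ HQ' (hval_drop_le_reidx v i j)).
Qed.
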